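(* Let $X\sim \mathcal{UNB}(r,p)$, i.e. $X$ has probability mass function $p(x)=\frac{q^{x} p^r}{1+x} \binom{r+x-1}{x} {}_2F_1(1, r+x; 2+x; q)$ for $x=0,1,2,\dots$. Then the cumulative distribution function of $X$ is \[ F_X(x)= F_Y(x)+ \frac{r+x}{x+2}\binom{r+x-1}{x} p^r q^{x+1}\, {}_2F_1\left(1,r+x+1;x+3;q\right), \] where $F_Y$ is the cumulative distribution function of $Y\sim \mathcal{NB}(r,p)$.
   Context: Parameters $r>0$, $0<p<1$, $q=1-p$. The Uniform-negative binomial distribution $\mathcal{UNB}(r,p)$ is defined by the stochastic representation $X\mid N\sim$ discrete uniform on $\{0,1,\dots,N\}$ and $N\sim \mathcal{NB}(r,p)$, the negative binomial distribution with probability mass function $P(N=n)=\binom{r+n-1}{n}p^r q^n$, $n=0,1,2,\dots$. The Gauss hypergeometric function is ${}_2F_1(a,b;c;z)=\sum_{n=0}^\infty \frac{(a)_n(b)_n}{(c)_n}\frac{z^n}{n!}$ for $|z|<1$, with $(a)_n$ the Pochhammer symbol (rising factorial). *)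

From Stdlib Require Import Reals.
From Coquelicot Require Import Coquelicot.
Open Scope R_scope.

Fixpoint poch (a : R) (n : nat) : R :=
  match n with
  | O => 1
  | S m => poch a m * (a + INR m)
  end.

(* Generalized binomial coefficient  binom(r+n-1, n) = (r)_n / n!. *)
Definition binom_neg (r : R) (n : nat) : R := poch r n / INR (Factorial.fact n).

Definition nb_pmf (r p : R) (n : nat) : R :=
  binom_neg r n * Rpower p r * (1 - p) ^ n.

Definition hyp2F1 (a b c z : R) : R :=
  Series (fun n => poch a n * poch b n / poch c n * z ^ n / INR (Factorial.fact n)).

(* Uniform-negative binomial pmf, from the stochastic representation
   X | N ~ Uniform{0..N}, N ~ NB(r,p):
   P(X = x) = sum_{n >= x} P(N = n) / (n + 1). *)
Definition unb_pmf (r p : R) (x : nat) : R :=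
  Series (fun k => nb_pmf r p (x + k) / INR (x + k + 1)).

Definition unb_cdf (r p : R) (x : nat) : R := sum_f_R0 (unb_pmf r p) x.
Definition nb_cdf (r p : R) (x : nat) : R := sum_f_R0 (nb_pmf r p) x.

(** Conditioning on N, the mass of X at k is the tail sum
    u(k) = sum_{n >= k} P(N = n) / (n + 1), so u(k) = P(N = k) / (k + 1) + u(k + 1).
    Summing over k <= x telescopes to F_X(x) = F_Y(x) + (x + 1) u(x + 1).  Finally
    P(N = x + 1 + m) is P(N = x) times a ratio of Pochhammer symbols in m, which turns
    (x + 1) u(x + 1) into the stated multiple of 2F1(1, r + x + 1; x + 3; q). *)

From Stdlib Require Import Reals Lra Lia.
From Coquelicot Require Import Coquelicot.
Open Scope R_scope.

Lemma poch_pos (a : R) (n : nat) : 0 < a -> 0 < poch a n.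
Proof.
  intros Ha; induction n as [|n IH]; simpl; [lra|].
  apply Rmult_lt_0_compat; [exact IH|]. pose proof (pos_INR n); lra.
Qed.

Lemma poch_add (a : R) (n m : nat) : poch a (n + m) = poch a n * poch (a + INR n) m.
Proof.
  induction m as [|m IH].
  - rewrite Nat.add_0_r; simpl; ring.
  - rewrite Nat.add_succ_r; simpl poch. rewrite IH, plus_INR. ring.
Qed.

Lemma poch_S (a : R) (m : nat) : poch a (S m) = a * poch (a + 1) m.
Proof. change (S m) with (1 + m)%nat. rewrite poch_add. simpl. ring. Qed.

Lemma poch_1 (m : nat) : poch 1 m = INR (Factorial.fact m).
Proof.
  induction m as [|m IH]; [reflexivity|].
  change (Factorial.fact (S m)) with (S m * Factorial.fact m)%nat.
  simpl poch. rewrite mult_INR, S_INR, IH. ring.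
Qed.

Lemma binom_neg_add (r : R) (n m : nat) :
  binom_neg r (n + m) = binom_neg r n * (poch (r + INR n) m / poch (INR n + 1) m).
Proof.
  unfold binom_neg. rewrite <- !poch_1, !poch_add, (Rplus_comm 1 (INR n)).
  pose proof (poch_pos 1 n Rlt_0_1).
  pose proof (poch_pos (INR n + 1) m ltac:(pose proof (pos_INR n); lra)).
  field; lra.
Qed.

Lemma hyp2F1_1_l (b c z : R) :
  hyp2F1 1 b c z = Series (fun n => poch b n / poch c n * z ^ n).
Proof.
  apply Series_ext; intro n. rewrite poch_1.
  set (f := INR (Factorial.fact n)).
  transitivity (poch b n / poch c n * z ^ n * (f * / f)); [unfold Rdiv; ring|].
  rewrite Rinv_r by apply INR_fact_neq_0. ring.
Qed.

Lemma nb_pmf_pos (r p : R) (n : nat) : 0 < r -> 0 < p -> p < 1 -> 0 < nb_pmf r p n.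
Proof.
  intros hr hp0 hp1. unfold nb_pmf, binom_neg.
  apply Rmult_lt_0_compat; [apply Rmult_lt_0_compat|].
  - apply Rdiv_lt_0_compat; [now apply poch_pos | apply INR_fact_lt_0].
  - apply exp_pos.
  - apply pow_lt; lra.
Qed.

Lemma nb_pmf_add (r p : R) (n m : nat) :
  nb_pmf r p (n + m)
  = nb_pmf r p n * (poch (r + INR n) m / poch (INR n + 1) m) * (1 - p) ^ m.
Proof. unfold nb_pmf. rewrite binom_neg_add, pow_add. ring. Qed.

Lemma nb_pmf_S (r p : R) (n : nat) :
  nb_pmf r p (S n) = nb_pmf r p n * ((r + INR n) / (INR n + 1)) * (1 - p).
Proof. rewrite <- Nat.add_1_r, nb_pmf_add. simpl. field. pose proof (pos_INR n); lra. Qed.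

Lemma is_lim_seq_shift_ratio (a : R) : is_lim_seq (fun n => (a + INR n) / (INR n + 1)) 1.
Proof.
  apply is_lim_seq_ext with (fun n => 1 + (a - 1) * / (INR n + 1)).
  { intro n. pose proof (pos_INR n). field. lra. }
  assert (Hinv : is_lim_seq (fun n => / (INR n + 1)) 0).
  { apply (is_lim_seq_inv _ p_infty); [|discriminate].
    eapply is_lim_seq_plus; [apply is_lim_seq_INR | apply is_lim_seq_const | reflexivity]. }
  assert (L := is_lim_seq_plus' _ _ _ _ (is_lim_seq_const 1)
                 (is_lim_seq_scal_l _ (a - 1) _ Hinv)).
  now rewrite Rmult_0_r, Rplus_0_r in L.
Qed.

Lemma ex_series_nb_pmf (r p : R) : 0 < r -> 0 < p -> p < 1 -> ex_series (nb_pmf r p).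
Proof.
  intros hr hp0 hp1.
  assert (Hpos : forall n, 0 < nb_pmf r p n) by (intro; now apply nb_pmf_pos).
  apply ex_series_ext with (fun n => Rabs (nb_pmf r p n)).
  { intro n. apply Rabs_pos_eq, Rlt_le, Hpos. }
  apply ex_series_DAlembert with (1 - p); [lra | intro n; apply Rgt_not_eq, Hpos |].
  apply is_lim_seq_ext with (fun n => (r + INR n) / (INR n + 1) * (1 - p)).
  - intro n. pose proof (Hpos n). pose proof (pos_INR n).
    assert (Hratio : nb_pmf r p (S n) / nb_pmf r p n = (r + INR n) / (INR n + 1) * (1 - p)).
    { rewrite nb_pmf_S. field. split; lra. }
    rewrite Hratio, Rabs_pos_eq; [reflexivity|].
    apply Rmult_le_pos; [apply Rlt_le, Rdiv_lt_0_compat|]; lra.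
  - assert (L := is_lim_seq_scal_r _ (1 - p) _ (is_lim_seq_shift_ratio r)).
    simpl in L. now rewrite Rmult_1_l in L.
Qed.

Section UniformMixture.

Variable w : nat -> R.
Hypothesis w_div_summable : ex_series (fun n => w n / INR (n + 1)).

Definition unif_mix_pmf (x : nat) : R := Series (fun k => w (x + k) / INR (x + k + 1)).

Lemma unif_mix_pmf_S (x : nat) : unif_mix_pmf x = w x / INR (x + 1) + unif_mix_pmf (S x).
Proof.
  unfold unif_mix_pmf at 1.
  rewrite Series_incr_1 by exact (proj1 (ex_series_incr_n _ x) w_div_summable).
  rewrite Nat.add_0_r. f_equal.
  apply Series_ext; intro k. now rewrite Nat.add_succ_r.
Qed.

Lemma unif_mix_cdf (x : nat) :
  sum_f_R0 unif_mix_pmf x = sum_f_R0 w x + INR (x + 1) * unif_mix_pmf (S x).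
Proof.
  induction x as [|x IH]; simpl sum_f_R0.
  - rewrite unif_mix_pmf_S. simpl. field.
  - rewrite IH, (unif_mix_pmf_S (S x)).
    replace (S x + 1)%nat with (S (x + 1)) by lia. rewrite S_INR.
    pose proof (pos_INR (x + 1)). field. lra.
Qed.

End UniformMixture.

Lemma ex_series_nb_pmf_div (r p : R) : 0 < r -> 0 < p -> p < 1 ->
  ex_series (fun n => nb_pmf r p n / INR (n + 1)).
Proof.
  intros hr hp0 hp1.
  apply (@ex_series_le R_AbsRing R_CompleteNormedModule) with (nb_pmf r p);
    [|now apply ex_series_nb_pmf].
  intro n. change norm with Rabs. simpl.
  pose proof (nb_pmf_pos r p n hr hp0 hp1).
  assert (1 <= INR (n + 1)) by (rewrite plus_INR; simpl; pose proof (pos_INR n); lra).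
  rewrite Rabs_pos_eq by (apply Rlt_le, Rdiv_lt_0_compat; lra).
  apply Rle_div_l; [lra|]. rewrite <- (Rmult_1_r (nb_pmf r p n)) at 1.
  apply Rmult_le_compat_l; lra.
Qed.

Lemma nb_pmf_tail_term (r p : R) (x m : nat) :
  INR (x + 1) * (nb_pmf r p (S x + m) / INR (S x + m + 1))
  = (r + INR x) / (INR x + 2) * (nb_pmf r p x * (1 - p))
    * (poch (r + INR x + 1) m / poch (INR x + 3) m * (1 - p) ^ m).
Proof.
  pose proof (pos_INR x) as Hx. pose proof (pos_INR m) as Hm.
  pose proof (poch_pos (INR x + 2) m ltac:(lra)) as Hpoch.
  assert (Hshift : poch (INR x + 3) m = poch (INR x + 2) m * (INR x + 2 + INR m) / (INR x + 2)).
  { change (poch (INR x + 2) m * (INR x + 2 + INR m)) with (poch (INR x + 2) (S m)).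
    rewrite poch_S. replace (INR x + 2 + 1) with (INR x + 3) by ring. field. lra. }
  replace (S x + m)%nat with (x + S m)%nat by lia.
  rewrite nb_pmf_add, !poch_S, Hshift.
  replace (INR (x + S m + 1)) with (INR x + 2 + INR m) by (rewrite !plus_INR, S_INR; simpl; ring).
  replace (INR x + 1 + 1) with (INR x + 2) by ring.
  rewrite plus_INR. simpl. field. repeat split; lra.
Qed.

Theorem theorem3 (r p : R) (hr : 0 < r) (hp0 : 0 < p) (hp1 : p < 1) (x : nat) :
  unb_cdf r p x =
  nb_cdf r p x
  + (r + INR x) / (INR x + 2) * binom_neg r x * Rpower p r * (1 - p) ^ (x + 1)
    * hyp2F1 1 (r + INR x + 1) (INR x + 3) (1 - p).
Proof.
  change (unb_cdf r p x) with (sum_f_R0 (unif_mix_pmf (nb_pmf r p)) x).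
  rewrite (unif_mix_cdf _ (ex_series_nb_pmf_div r p hr hp0 hp1)). f_equal.
  unfold unif_mix_pmf. rewrite hyp2F1_1_l, <- !Series_scal_l.
  apply Series_ext; intro m.
  rewrite nb_pmf_tail_term. unfold nb_pmf. rewrite pow_add. ring.
Qed.
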